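(* Let $X=[0,1]^d$, let $Y$ be a convex subset of a finite-dimensional normed space with norm $\|\cdot\|_Y$, let $\mathcal{M}\subset X$ be a compact smooth embedded manifold, $\rho$ a probability density on $\mathcal{M}$, and $y:X\to Y$ the label function. Let $\ell:Y\times Y\to\mathbb{R}$ be strongly convex with parameter $\theta>0$, i.e. $\ell(ty_1+(1-t)y_2,y_0)+\tfrac{\theta}{2}t(1-t)\|y_1-y_2\|_Y^2\le t\ell(y_1,y_0)+(1-t)\ell(y_2,y_0)$ for all $y_0,y_1,y_2\in Y$, $t\in[0,1]$. Fix $\lambda>0$ and let $J[u]=\int_{\mathcal{M}}\ell(u(x),y(x))\rho\,dVol(x)+\lambda\,\mathrm{Lip}(u)$. If $u^\lambda\in W^{1,\infty}(X;Y)$ is a minimizer of $J$ and $u\in W^{1,\infty}(X;Y)$, then $$\frac{\theta}{2}\int_{\mathcal{M}}\|u-u^\lambda\|_Y^2\rho\,dVol(x)\le J[u]-J[u^\lambda].$$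
   Context: $W^{1,\infty}(X;Y)$ is the space of Lipschitz maps $X\to Y$; $\mathrm{Lip}(u)$ is the Lipschitz constant of $u$. *)

From HB Require Import structures.
From mathcomp Require Import all_boot all_order all_algebra.
From mathcomp Require Import all_classical all_reals all_analysis.
Unset Printing Implicit Defensive.
Import Order.TTheory GRing.Theory Num.Theory.
Local Open Scope classical_set_scope.
Local Open Scope ring_scope.

(* Points of R^d are d-tuples of reals (this type carries the product Borel
   sigma-algebra of mathcomp-analysis). *)

Definition edist (R : realType) (d : nat) (x x' : d.-tuple R) : R :=
  Num.sqrt (\sum_(i < d) (tnth x i - tnth x' i) ^+ 2).

Definition cube (R : realType) (d : nat) : set (d.-tuple R) :=
  [set x | forall i : 'I_d, 0 <= tnth x i <= 1].

(* N is a norm on the finite-dimensional real vector space 'rV[R]_m.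
   (Every finite-dimensional real normed space is isometric to such a space.) *)
Definition is_norm (R : realType) (m : nat) (N : 'rV[R]_m -> R) : Prop :=
  [/\ forall v, 0 <= N v,
      forall v, N v = 0 -> v = 0,
      forall (a : R) v, N (a *: v) = `|a| * N v
    & forall v w, N (v + w) <= N v + N w].

Definition convex_subset (R : realType) (m : nat) (Y : set 'rV[R]_m) : Prop :=
  forall (a b : 'rV[R]_m) (t : R), Y a -> Y b -> 0 <= t <= 1 ->
    Y (t *: a + (1 - t) *: b).

Definition euclid_compact (R : realType) (d : nat) (M : set (d.-tuple R)) : Prop :=
  (exists B : R, forall x, M x -> forall i : 'I_d, `|tnth x i| <= B) /\
  (forall x : d.-tuple R,
     (forall e : R, 0 < e -> exists2 z, M z & edist R d x z < e) -> M x).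

(* u belongs to W^{1,oo}(X;Y): u maps X into Y and is Lipschitz on X
   (Euclidean distance on X, norm N on Y). *)
Definition W1inf (R : realType) (d m : nat) (N : 'rV[R]_m -> R)
    (Y : set 'rV[R]_m) (u : d.-tuple R -> 'rV[R]_m) : Prop :=
  (forall x, cube R d x -> Y (u x)) /\
  exists L : R, forall x x', cube R d x -> cube R d x' ->
    N (u x - u x') <= L * edist R d x x'.

(* Lipschitz constant Lip(u) = sup_{x <> x' in X} N(u x - u x') / |x - x'|
   (equal to 0 when the set of quotients is empty). *)
Definition Lip (R : realType) (d m : nat) (N : 'rV[R]_m -> R)
    (u : d.-tuple R -> 'rV[R]_m) : R :=
  sup [set q : R | exists x x', [/\ cube R d x, cube R d x', x <> x'
                                  & q = N (u x - u x') / edist R d x x']].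

Definition Jfun (R : realType) (d m : nat) (N : 'rV[R]_m -> R)
    (mu : {measure set (d.-tuple R) -> \bar R}) (M : set (d.-tuple R))
    (l : 'rV[R]_m -> 'rV[R]_m -> R) (y : d.-tuple R -> 'rV[R]_m)
    (lam : R) (u : d.-tuple R -> 'rV[R]_m) : R :=
  Rintegral mu M (fun x => l (u x) (y x)) + lam * Lip R d m N u.

From Pilot Require Import Defs.
From HB Require Import structures.
From mathcomp Require Import all_boot all_order all_algebra.
From mathcomp Require Import all_classical all_reals all_analysis.
From mathcomp Require Import ring lra.
Import Order.TTheory GRing.Theory Num.Theory.
Local Open Scope classical_set_scope.
Local Open Scope ring_scope.

(* The functional J is strongly convex along segments: the fidelity term
   inherits the modulus theta/2 from l pointwise, and Lip is convex.  For
   v_t = t u + (1 - t) u^lam the minimality of u^lam then gives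
     t (1 - t) theta/2 int ||u - u^lam||^2 <= t (J[u] - J[u^lam]);
   divide by t and let t -> 0. *)

Lemma edist_ge0 (R : realType) (d : nat) (x x' : d.-tuple R) : 0 <= Defs.edist R d x x'.
Proof. exact: sqrtr_ge0. Qed.

Definition cube_lipschitz (R : realType) (d m : nat) (N : 'rV[R]_m -> R)
    (u : d.-tuple R -> 'rV[R]_m) (L : R) : Prop :=
  forall x x', cube R d x -> cube R d x' -> N (u x - u x') <= L * Defs.edist R d x x'.

Definition lip_ratios (R : realType) (d m : nat) (N : 'rV[R]_m -> R)
    (u : d.-tuple R -> 'rV[R]_m) : set R :=
  [set q | exists x x', [/\ cube R d x, cube R d x', x <> x'
                          & q = N (u x - u x') / Defs.edist R d x x']].

Section LipschitzConvexCombination.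
Context {R : realType} {d m : nat} {N : 'rV[R]_m -> R}.
Hypothesis normN : is_norm R m N.

Lemma LipE u : Lip R d m N u = sup (lip_ratios R d m N u).
Proof. by []. Qed.

Lemma N_convex_combB (t : R) (a b a' b' : 'rV[R]_m) : 0 <= t <= 1 ->
  N ((t *: a + (1 - t) *: b) - (t *: a' + (1 - t) *: b'))
    <= t * N (a - a') + (1 - t) * N (b - b').
Proof.
case: normN => _ _ NZ ND /andP[t0 t1].
rewrite opprD addrACA -!scalerBr.
by apply: le_trans (ND _ _) _; rewrite !NZ !ger0_norm ?subr_ge0.
Qed.

Lemma lip_ratios_ubound u L :
  cube_lipschitz R d m N u L -> has_ubound (lip_ratios R d m N u).
Proof.
move=> uL; exists (Num.max L 0) => _ [x [x' [cx cx' _ ->]]].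
have [->|e0] := eqVneq (Defs.edist R d x x') 0; first by rewrite invr0 mulr0 le_max lexx orbT.
have {}e0 : 0 < Defs.edist R d x x' by rewrite lt_neqAle eq_sym e0 edist_ge0.
by rewrite le_max ler_pdivrMr ?uL.
Qed.

Lemma Lip_convex_comb {u w} {t L1 L2 : R} : 0 <= t <= 1 ->
  cube_lipschitz R d m N u L1 -> cube_lipschitz R d m N w L2 ->
  Lip R d m N (fun x => t *: u x + (1 - t) *: w x)
    <= t * Lip R d m N u + (1 - t) * Lip R d m N w.
Proof.
move=> /[dup] t01 /andP[t0 t1] uL wL; rewrite !LipE.
have [[x [x' [cx cx' xx']]]|no_pair] :=
  pselect (exists x x', [/\ cube R d x, cube R d x' & x <> x']); last first.
  have lip_ratios0 f : lip_ratios R d m N f = set0.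
    by apply/seteqP; split=> // q [x [x' [cx cx' xx' _]]]; apply: no_pair; exists x, x'.
  by rewrite !lip_ratios0 sup0 !mulr0 addr0.
apply: ge_sup; first by eexists; exists x, x'.
move=> _ [z [z' [cz cz' zz' ->]]].
have ratio_le_Lip f L : cube_lipschitz R d m N f L ->
    N (f z - f z') / Defs.edist R d z z' <= sup (lip_ratios R d m N f).
  by move/lip_ratios_ubound/ub_le_sup; apply; exists z, z'.
apply: le_trans (_ : t * (N (u z - u z') / Defs.edist R d z z')
                   + (1 - t) * (N (w z - w z') / Defs.edist R d z z') <= _).
  by rewrite !mulrA -mulrDl ler_wpM2r ?invr_ge0 ?edist_ge0 ?N_convex_combB.
by rewrite lerD // ler_wpM2l ?subr_ge0 // (ratio_le_Lip _ _ uL, ratio_le_Lip _ _ wL).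
Qed.

Lemma W1inf_convex_comb {Y : set 'rV[R]_m} {u w} {t : R} :
  convex_subset R m Y -> 0 <= t <= 1 -> W1inf R d m N Y u -> W1inf R d m N Y w ->
  W1inf R d m N Y (fun x => t *: u x + (1 - t) *: w x).
Proof.
move=> convY /[dup] t01 /andP[t0 t1] [Yu [L1 uL]] [Yw [L2 wL]].
split=> [x cx|]; first exact: convY (Yu x cx) (Yw x cx) t01.
exists (t * L1 + (1 - t) * L2) => x x' cx cx'.
apply: le_trans (N_convex_combB _ _ _ _ _ t01) _.
by rewrite [leRHS]mulrDl -!mulrA lerD // ler_wpM2l ?subr_ge0 ?uL ?wL.
Qed.

End LipschitzConvexCombination.

Section RealIntegralBounds.
Context {d : measure_display} {T : measurableType d} {R : realType}.
Context {mu : {measure set T -> \bar R}} {D : set T}.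
Hypothesis mD : measurable D.

(* [h] need not be measurable: for nonnegative functions the integral is the
   supremum over simple minorants, which is monotone in the integrand. *)
Lemma Rintegral_ge0_le (h g : T -> R) :
  (forall x, D x -> 0 <= h x) -> (forall x, D x -> h x <= g x) ->
  mu.-integrable D (EFin \o g) ->
  Rintegral mu D h <= Rintegral mu D g.
Proof.
move=> h0 hg ig.
have g0 x : D x -> 0 <= g x by move=> Dx; exact: le_trans (h0 x Dx) (hg x Dx).
have hg_int : (\int[mu]_(x in D) (h x)%:E <= \int[mu]_(x in D) (g x)%:E)%E.
  rewrite ge0_integralE => [|x Dx]; last by rewrite lee_fin h0.
  rewrite ge0_integralE => [|x Dx]; last by rewrite lee_fin g0.
  apply: ereal_sup_le => _ [s /= sh <-]; exists s => //= x.
  apply: le_trans (sh x) _; rewrite /patch; case: ifP => // /set_mem Dx.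
  by rewrite lee_fin hg.
have g_fin := integrable_fin_num mD ig.
have h_fin : (\int[mu]_(x in D) (h x)%:E)%E \is a fin_num.
  rewrite ge0_fin_numE; last by apply: integral_ge0 => x Dx; rewrite lee_fin h0.
  by apply: le_lt_trans hg_int _; move: g_fin; rewrite fin_numE => /andP[_ /eqP]; rewrite ltey => /eqP.
by rewrite /Rintegral fine_le.
Qed.

Lemma integrableZl_EFin (k : R) {f : T -> R} :
  mu.-integrable D (EFin \o f) -> mu.-integrable D (EFin \o (fun x => k * f x)).
Proof.
move=> i; apply: eq_integrable mD _ _ _ (integrableZl mD k i) => x _ /=.
by rewrite EFinM.
Qed.

Lemma Rintegral_ge0_pM_le (c : R) (h g : T -> R) : 0 < c ->
  (forall x, D x -> 0 <= h x) -> (forall x, D x -> c * h x <= g x) ->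
  mu.-integrable D (EFin \o g) ->
  c * Rintegral mu D h <= Rintegral mu D g.
Proof.
move=> c0 h0 chg ig.
rewrite -ler_pdivlMl // -RintegralZl //.
apply: Rintegral_ge0_le => [//|x Dx|]; last exact: integrableZl_EFin.
by rewrite ler_pdivlMl // chg.
Qed.

Lemma integrableZD (a b : R) {f1 f2 : T -> R} :
  mu.-integrable D (EFin \o f1) -> mu.-integrable D (EFin \o f2) ->
  mu.-integrable D (EFin \o (fun x => a * f1 x + b * f2 x)).
Proof.
move=> i1 i2; apply: eq_integrable mD _ _ _
  (integrableD mD (integrableZl_EFin a i1) (integrableZl_EFin b i2)) => x _ /=.
by rewrite EFinD.
Qed.

Lemma RintegralZD (a b : R) (f1 f2 : T -> R) :
  mu.-integrable D (EFin \o f1) -> mu.-integrable D (EFin \o f2) ->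
  Rintegral mu D (fun x => a * f1 x + b * f2 x)
    = a * Rintegral mu D f1 + b * Rintegral mu D f2.
Proof.
by move=> i1 i2; rewrite RintegralD ?RintegralZl ?integrableZl_EFin.
Qed.

End RealIntegralBounds.

Section StrongConvexity.
Context {R : realType} {d m : nat} {N : 'rV[R]_m -> R} {Y : set 'rV[R]_m}.
Context {M : set (d.-tuple R)} {mu : {measure set (d.-tuple R) -> \bar R}}.
Context {y : d.-tuple R -> 'rV[R]_m} {l : 'rV[R]_m -> 'rV[R]_m -> R}.
Context {theta lam : R}.
Hypotheses (normN : is_norm R m N) (convY : convex_subset R m Y).
Hypotheses (mM : measurable M) (M_cube : M `<=` cube R d).
Hypothesis Yy : forall x, cube R d x -> Y (y x).
Hypothesis theta_gt0 : 0 < theta.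
Hypothesis l_strongly_convex : forall (y0 y1 y2 : 'rV[R]_m) (t : R),
  Y y0 -> Y y1 -> Y y2 -> 0 <= t <= 1 ->
  l (t *: y1 + (1 - t) *: y2) y0 + theta / 2 * t * (1 - t) * N (y1 - y2) ^+ 2
    <= t * l y1 y0 + (1 - t) * l y2 y0.
Hypothesis lam_ge0 : 0 <= lam.
Hypothesis l_integrable : forall v, W1inf R d m N Y v ->
  mu.-integrable M (fun x => (l (v x) (y x))%:E).

Let fidelity (v : d.-tuple R -> 'rV[R]_m) : R := Rintegral mu M (fun x => l (v x) (y x)).

Lemma fidelity_strongly_convex {u w} {t : R} : 0 < t < 1 ->
  W1inf R d m N Y u -> W1inf R d m N Y w ->
  fidelity (fun x => t *: u x + (1 - t) *: w x)
    + theta / 2 * t * (1 - t) * Rintegral mu M (fun x => N (u x - w x) ^+ 2)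
    <= t * fidelity u + (1 - t) * fidelity w.
Proof.
move=> /andP[t0 t1] Wu Ww; set v := fun x => _.
have t01 : 0 <= t <= 1 by rewrite !ltW.
have Wv : W1inf R d m N Y v by exact: W1inf_convex_comb.
have c_gt0 : 0 < theta / 2 * t * (1 - t) by rewrite !mulr_gt0 ?subr_gt0.
rewrite /fidelity addrC -lerBrDr -RintegralZD ?l_integrable //.
rewrite -RintegralB ?integrableZD ?l_integrable //.
apply: Rintegral_ge0_pM_le => // [x _|x Mx|]; first exact: sqr_ge0.
  have cx := M_cube _ Mx.
  by rewrite lerBrDr addrC; exact: l_strongly_convex (Yy x cx) (Wu.1 x cx) (Ww.1 x cx) t01.
have iuw := integrableZD mM t (1 - t) (l_integrable _ Wu) (l_integrable _ Ww).
apply: eq_integrable mM _ _ _ (integrableB mM iuw (l_integrable _ Wv)) => x _ /=.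
by rewrite EFinB.
Qed.

Lemma Jfun_strongly_convex {u w} {t : R} : 0 < t < 1 ->
  W1inf R d m N Y u -> W1inf R d m N Y w ->
  Jfun R d m N mu M l y lam (fun x => t *: u x + (1 - t) *: w x)
    + theta / 2 * t * (1 - t) * Rintegral mu M (fun x => N (u x - w x) ^+ 2)
    <= t * Jfun R d m N mu M l y lam u + (1 - t) * Jfun R d m N mu M l y lam w.
Proof.
move=> /[dup] t01 /andP[t0 t1] /[dup] Wu [_ [L1 uL]] /[dup] Ww [_ [L2 wL]].
have := fidelity_strongly_convex t01 Wu Ww; rewrite /fidelity => fid.
have t01W : 0 <= t <= 1 by rewrite !ltW.
have := Lip_convex_comb normN t01W uL wL.
move/(ler_wpM2l lam_ge0); rewrite /Jfun; lra.
Qed.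

End StrongConvexity.

Lemma ler_of_forall_1subrM_le (R : realFieldType) (A D : R) :
  (forall t, 0 < t < 1 -> (1 - t) * A <= D) -> A <= D.
Proof.
move=> H; have [A_le0|A_gt0] := lerP A 0.
  have := H 2^-1; rewrite invr_gt0 invf_lt1 ?ltr0n ?ltr1n // => /(_ isT); lra.
apply/ler_addgt0Pr => e e_gt0.
have eA_gt0 : 0 < e + A by rewrite addr_gt0.
set t := e / (e + A).
have t_gt0 : 0 < t by rewrite divr_gt0.
have t_lt1 : t < 1 by rewrite ltr_pdivrMr // mul1r ltrDl.
have tA_le : t * A <= e by rewrite mulrAC ler_pdivrMr // ler_pM2l // lerDr ltW.
have := H t; rewrite t_gt0 t_lt1 => /(_ isT); lra.
Qed.

Theorem mainTheorem8 (R : realType) (d m : nat)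
    (N : 'rV[R]_m -> R) (Y : set 'rV[R]_m)
    (M : set (d.-tuple R)) (mu : {measure set (d.-tuple R) -> \bar R})
    (y : d.-tuple R -> 'rV[R]_m) (l : 'rV[R]_m -> 'rV[R]_m -> R)
    (theta lam : R) (ulam u : d.-tuple R -> 'rV[R]_m) :
  is_norm R m N ->
  convex_subset R m Y ->
  measurable M -> M `<=` cube R d -> euclid_compact R d M ->
  mu M = 1%E ->
  (forall x, cube R d x -> Y (y x)) ->
  0 < theta ->
  (forall (y0 y1 y2 : 'rV[R]_m) (t : R), Y y0 -> Y y1 -> Y y2 -> 0 <= t <= 1 ->
     l (t *: y1 + (1 - t) *: y2) y0 + theta / 2 * t * (1 - t) * N (y1 - y2) ^+ 2
       <= t * l y1 y0 + (1 - t) * l y2 y0) ->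
  0 < lam ->
  (forall v, W1inf R d m N Y v ->
     mu.-integrable M (fun x => (l (v x) (y x))%:E)) ->
  W1inf R d m N Y ulam ->
  (forall v, W1inf R d m N Y v ->
     Jfun R d m N mu M l y lam ulam <= Jfun R d m N mu M l y lam v) ->
  W1inf R d m N Y u ->
  theta / 2 * Rintegral mu M (fun x => N (u x - ulam x) ^+ 2)
    <= Jfun R d m N mu M l y lam u - Jfun R d m N mu M l y lam ulam.
Proof.
move=> normN convY mM M_cube _ _ Yy theta_gt0 l_convex lam_gt0 l_int Wulam ulam_min Wu.
apply: ler_of_forall_1subrM_le => t /[dup] t01 /andP[t_gt0 t_lt1].
have t01W : 0 <= t <= 1 by rewrite !ltW.
have Wv := W1inf_convex_comb normN convY t01W Wu Wulam.
have := ulam_min _ Wv.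
have := Jfun_strongly_convex normN convY mM M_cube Yy theta_gt0 l_convex
  (ltW lam_gt0) l_int t01 Wu Wulam.
move=> Jv_le Jv_ge; rewrite -(ler_pM2l t_gt0); lra.
Qed.
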